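(* Let $s\in\{\tfrac12,1,\tfrac32,\dots\}$, $N\ge1$ and $\lambda\in\mathbb{C}$. The transfer matrix $t^{(2s)}_1(u)$ satisfies, for all $u\in\mathbb{C}$, $${}^t\,t^{(2s)}_1(-u-2\lambda s)=(-1)^{N-1}\,t^{(2s)}_1(u),$$ where ${}^t$ denotes the transpose on $(\mathbb{C}^{2s+1})^{\otimes N}$ with respect to the standard tensor-product basis.
   Context: Define $a_j(u)=\sinh[u+(2s+1-j)\lambda]$ and $b_j(\lambda)=\sqrt{\sinh(j\lambda)\sinh[\lambda(2s+1-j)]}$ (fixed choice of square root). Let $R^{(1,2s)}(u)$ be the matrix on $\mathbb{C}^2\otimes\mathbb{C}^{2s+1}$ (indices $\mu,\nu\in\{1,2\}$, $\alpha,\beta\in\{1,\dots,2s+1\}$) whose only nonzero entries are $R_{1j}^{1j}=a_j(u)$, $R_{2j}^{2j}=a_{2s+2-j}(u)$, $R_{1\,j+1}^{2\,j}=R_{2\,j}^{1\,j+1}=b_j(\lambda)$. With auxiliary space $V_a=\mathbb{C}^2$ and quantum spaces $V_1,\dots,V_N\cong\mathbb{C}^{2s+1}$, let $R_{ak}(u)$ be $R^{(1,2s)}(u)$ acting on $V_a\otimes V_k$, and $F_a=\begin{pmatrix}0&1\\1&0\end{pmatrix}$ acting on $V_a$. Then $t^{(2s)}_1(u)={\rm tr}_a\big(R_{a1}(u)\cdots R_{aN}(u)F_a\big)$, an operator on $V_1\otimes\cdots\otimes V_N$. *)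

From Stdlib Require Import Reals.
From mathcomp Require Import all_boot all_algebra.
From mathcomp Require Import complex Rstruct.

Unset Printing Implicit Defensive.

Import GRing.Theory.
Local Open Scope ring_scope.

Notation Cx := (complex R).

Definition cexp (z : Cx) : Cx :=
  Complex (Rtrigo_def.exp (Re z) * Rtrigo_def.cos (Im z))
          (Rtrigo_def.exp (Re z) * Rtrigo_def.sin (Im z)).

Definition csinh (z : Cx) : Cx := (cexp z - cexp (- z)) / 2%:R.

(* Throughout, m = 2s (so m >= 1), the quantum space is C^(m+1) with basis
   indexed by alpha : 'I_m.+1, the paper's index being j = alpha + 1;
   the auxiliary space C^2 has basis 'I_2, the paper's index being mu + 1. *)

Definition a_coef (m : nat) (lam : Cx) (j : nat) (u : Cx) : Cx :=
  csinh (u + (m.+1 - j)%:R * lam).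

Definition is_b_choice (m : nat) (lam : Cx) (b : nat -> Cx) : Prop :=
  forall j : nat, (1 <= j <= m)%N ->
    b j ^+ 2 = csinh (j%:R * lam) * csinh (lam * (m.+1 - j)%:R).

(* Entries R^{mu alpha}_{nu beta} of R^{(1,2s)}(u); the row index is the
   upper pair (mu, alpha), the column index the lower pair (nu, beta). *)
Definition Rmat (m : nat) (lam : Cx) (b : nat -> Cx) (u : Cx)
    (x y : 'I_2 * 'I_m.+1) : Cx :=
  let mu := (x.1 : nat).+1 in let j := (x.2 : nat).+1 in
  let nu := (y.1 : nat).+1 in let k := (y.2 : nat).+1 in
  if (mu == nu) && (j == k) then
    (if mu == 1%N then a_coef m lam j u else a_coef m lam (m.+2 - j) u)
  else if [&& mu == 2%N, nu == 1%N & k == j.+1] then b j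
  else if [&& mu == 1%N, nu == 2%N & j == k.+1] then b k
  else 0.

Definition op (T : finType) := T -> T -> Cx.
Definition op_mul (T : finType) (A B : op T) : op T :=
  fun x y => \sum_(z : T) A x z * B z y.
Definition op_id (T : finType) : op T := fun x y => (x == y)%:R.
Definition op_prod (T : finType) (l : seq (op T)) : op T :=
  foldr (@op_mul T) (@op_id T) l.

(* Standard basis of (C^(m+1))^{tensor N}. *)
Definition cfg (m N : nat) := {ffun 'I_N -> 'I_m.+1}.

Definition R_site (m N : nat) (lam : Cx) (b : nat -> Cx) (u : Cx) (k : 'I_N)
  : op ('I_2 * cfg m N)%type :=
  fun x y =>
    Rmat m lam b u (x.1, x.2 k) (y.1, y.2 k)
    * [forall i : 'I_N, (i != k) ==> (x.2 i == y.2 i)]%:R.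

Definition F_aux (m N : nat) : op ('I_2 * cfg m N)%type :=
  fun x y => ((x.1 != y.1) && (x.2 == y.2))%:R.

Definition transfer (m N : nat) (lam : Cx) (b : nat -> Cx) (u : Cx)
  : op (cfg m N) :=
  fun al be =>
    \sum_(mu : 'I_2)
      op_prod _ ([seq R_site m N lam b u k | k <- enum 'I_N] ++ [:: F_aux m N])
              (mu, al) (mu, be).

Definition op_transpose (T : finType) (A : op T) : op T := fun x y => A y x.

From Stdlib Require Import Reals FunctionalExtensionality.
From mathcomp Require Import all_boot all_algebra.
From mathcomp Require Import complex Rstruct ring.
Import GRing.Theory.
Local Open Scope ring_scope.

(* Crossing symmetry: R^{mu alpha}_{nu beta}(-u - 2s lam)
   = -(-1)^(mu+nu) R^{mu' beta}_{nu' alpha}(u), where mu' is the other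
   auxiliary index.  For the 2x2 auxiliary blocks L(u)_{alpha beta} of R this
   reads L(-u - 2s lam)_{beta alpha} = - J L(u)_{alpha beta} J^T with
   J = i sigma^y, J J^T = 1.  A matrix element of t(u) is the auxiliary trace
   tr(L_1 ... L_N sigma^x), so the transposed crossed transfer matrix is
   (-1)^N tr(J L_1 ... L_N J^T sigma^x), and J^T sigma^x J = - sigma^x.
   The b_j only occur as the two symmetric off-diagonal entries of R. *)

Lemma csinh_opp z : csinh (- z) = - csinh z.
Proof. by rewrite /csinh opprK -mulNr opprB. Qed.

Lemma a_coef_crossing m lam u (j k : nat) : (j + k)%N = m ->
  a_coef m lam j.+1 (- u - m%:R * lam) = - a_coef m lam k.+1 u.
Proof.
move=> <-; rewrite /a_coef -csinh_opp !subSS addnK addKn; congr csinh.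
by rewrite natrD; ring.
Qed.

Lemma Rmat_crossing m lam b u (mu nu : 'I_2) (x y : 'I_m.+1) :
  Rmat m lam b (- u - m%:R * lam) (mu, x) (nu, y)
  = - ((-1) ^+ mu * (-1) ^+ nu) * Rmat m lam b u (rev_ord mu, y) (rev_ord nu, x).
Proof.
case: x y => [x ltxm] [y ltym]; rewrite /Rmat /=.
have xDmx : (x + (m - x))%N = m by rewrite subnKC // -ltnS.
have mSx : (m.+2 - x.+1)%N = (m - x).+1 by rewrite subSS subSn // -ltnS.
have a1 := @a_coef_crossing m lam u _ _ xDmx.
have a2 := @a_coef_crossing m lam u _ _ (etrans (addnC _ _) xDmx).
case: mu nu => [[|[|//]] ?] [[|[|//]] ?] /=; rewrite ?expr0 ?expr1 ?mSx.
- by rewrite eq_sym; case: eqP => [[->]|_]; rewrite ?mSx ?a1; ring.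
- by ring.
- by ring.
- by rewrite eq_sym; case: eqP => [[->]|_]; rewrite ?a2; ring.
Qed.

Section PauliMatrices.
Variable R : comRingType.

Definition sigma_x : 'M[R]_2 := \matrix_(i, j) (i != j)%:R.
Definition isigma_y : 'M[R]_2 := \matrix_(i, j) ((-1) ^+ i * (i != j)%:R).

Lemma mul_trmx_isigma_y : isigma_y^T * isigma_y = 1.
Proof.
apply/matrixP => i j; rewrite -mulmxE !mxE !big_ord_recl big_ord0 !mxE.
by case: i j => [[|[|//]] ?] [[|[|//]] ?]; rewrite /= ?expr0 ?expr1; ring.
Qed.

Lemma mul_isigma_y_trmx : isigma_y * isigma_y^T = 1.
Proof.
apply/matrixP => i j; rewrite -mulmxE !mxE !big_ord_recl big_ord0 !mxE.
by case: i j => [[|[|//]] ?] [[|[|//]] ?]; rewrite /= ?expr0 ?expr1; ring.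
Qed.

Lemma isigma_y_conjE (A : 'M[R]_2) i j :
  (isigma_y * A * isigma_y^T) i j
  = (-1) ^+ i * (-1) ^+ j * A (rev_ord i) (rev_ord j).
Proof.
(* Going through [nat] identifies the ordinals produced by [big_ord_recl] and
   [rev_ord], which differ only in their proof components. *)
pose a (p q : nat) := A (inord p) (inord q).
have aE p q : A p q = a p q by rewrite /a !inord_val.
rewrite -!mulmxE !mxE !big_ord_recl !big_ord0 !mxE.
rewrite !big_ord_recl !big_ord0 !mxE !aE.
by case: i j => [[|[|//]] ?] [[|[|//]] ?]; rewrite /= ?expr0 ?expr1; ring.
Qed.

Lemma mxtrace_mul_sigma_x (B : 'M[R]_2) : \tr (B * sigma_x) = B 0 1 + B 1 0.
Proof.
pose a (p q : nat) := B (inord p) (inord q).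
have aE p q : B p q = a p q by rewrite /a !inord_val.
rewrite -mulmxE /mxtrace !big_ord_recl big_ord0 !mxE.
by rewrite !big_ord_recl !big_ord0 !mxE !aE /=; ring.
Qed.

Lemma mxtrace_conj_isigma_y_sigma_x (A : 'M[R]_2) :
  \tr (isigma_y * A * isigma_y^T * sigma_x) = - \tr (A * sigma_x).
Proof.
have rev0 : rev_ord (0 : 'I_2) = 1 by apply: val_inj.
have rev1 : rev_ord (1 : 'I_2) = 0 by apply: val_inj.
by rewrite !mxtrace_mul_sigma_x !isigma_y_conjE rev0 rev1 /= expr0 expr1; ring.
Qed.

End PauliMatrices.

Arguments sigma_x {R}.
Arguments isigma_y {R}.

Lemma op_mulr1 (T : finType) (A : op T) x y : op_mul T A (op_id T) x y = A x y.
Proof.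
rewrite /op_mul (bigD1 y) //= /op_id eqxx mulr1 big1 ?addr0 // => z /negbTE zNy.
by rewrite zNy mulr0.
Qed.

Section Monodromy.
Variables (m N : nat) (lam : Cx) (b : nat -> Cx).

Definition lax_mx u (x y : 'I_m.+1) : 'M[Cx]_2 :=
  \matrix_(mu, nu) Rmat m lam b u (mu, x) (nu, y).

Lemma lax_mx_crossing u x y :
  lax_mx (- u - m%:R * lam) x y = - (isigma_y * lax_mx u y x * isigma_y^T).
Proof.
apply/matrixP => mu nu.
by rewrite [LHS]mxE [RHS]mxE isigma_y_conjE !mxE Rmat_crossing mulNr.
Qed.

Definition monodromy u (ks : seq 'I_N) (al be : cfg m N) : 'M[Cx]_2 :=
  \prod_(k <- ks) lax_mx u (al k) (be k).

Lemma monodromy_crossing u ks al be :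
  monodromy (- u - m%:R * lam) ks be al
  = (-1) ^+ size ks *: (isigma_y * monodromy u ks al be * isigma_y^T).
Proof.
rewrite /monodromy; elim: ks => [|k ks IH].
  by rewrite !big_nil scale1r mulr1 mul_isigma_y_trmx.
rewrite !big_cons IH lax_mx_crossing exprS mulN1r scaleNr -scalerN -scalerAr.
by rewrite mulNr !mulrA -(mulrA _ _ isigma_y) mul_trmx_isigma_y mulr1.
Qed.

Definition agree_off (ks : seq 'I_N) (al be : cfg m N) : bool :=
  [forall i, (i \in ks) || (al i == be i)].

Definition cfg_set (al : cfg m N) (k : 'I_N) (c : 'I_m.+1) : cfg m N :=
  [ffun i => if i == k then c else al i].

Lemma monodromy_cfg_set u ks al be k c :
  k \notin ks -> monodromy u ks (cfg_set al k c) be = monodromy u ks al be.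
Proof.
move=> kNks; apply: eq_big_seq => i iks; rewrite ffunE.
by case: eqP iks => // ->; rewrite (negbTE kNks).
Qed.

Lemma agree_off_cons ks (al be g : cfg m N) k : k \notin ks ->
  [forall i, (i != k) ==> (al i == g i)] && agree_off ks g be
  = (g == cfg_set al k (be k)) && agree_off (k :: ks) al be.
Proof.
move=> kNks; apply/andP/andP.
- case=> /forallP alg /forallP gbe; split.
    apply/eqP/ffunP => i; rewrite ffunE; case: (eqVneq i k) => [->|ik].
      by move: (gbe k); rewrite (negbTE kNks) => /eqP.
    by move/implyP: (alg i) => /(_ ik) /eqP.
  apply/forallP => i; rewrite in_cons; case: (eqVneq i k) => //= ik.
  by move/implyP: (alg i) => /(_ ik) /eqP ->.
- case=> /eqP -> /forallP albe; split; apply/forallP => i; rewrite ffunE.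
    by case: (eqVneq i k) => [->|ik]; rewrite ?eqxx.
  case: (eqVneq i k) => [->|ik]; rewrite ?eqxx ?orbT //=.
  by move: (albe i); rewrite in_cons (negbTE ik).
Qed.

Lemma op_prod_sitesE u ks mu nu al be : uniq ks ->
  op_prod _ ([seq R_site m N lam b u k | k <- ks] ++ [:: F_aux m N])
          (mu, al) (nu, be)
  = (agree_off ks al be)%:R * (monodromy u ks al be * sigma_x) mu nu.
Proof.
elim: ks mu al => [|k ks IH] mu al /= => [_ | /andP[kNks uks]].
  rewrite op_mulr1 /F_aux /monodromy big_nil mul1r mxE -natrM mulnb andbC /=.
  suff -> : agree_off [::] al be = (al == be) by [].
  apply/forallP/eqP => [albe | -> i]; last by rewrite eqxx.
  by apply/ffunP => i; apply/eqP/albe.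
set P := op_prod _ _.
transitivity (\sum_(l : 'I_2) \sum_(g : cfg m N)
                R_site m N lam b u k (mu, al) (l, g) * P (l, g) (nu, be)).
  by rewrite /op_mul pair_big; apply: eq_bigr => -[].
rewrite /monodromy big_cons -/(monodromy u ks al be) -mulrA -mulmxE mxE mulr_sumr.
apply: eq_bigr => l _; rewrite mxE mulmxE.
have siteE g : R_site m N lam b u k (mu, al) (l, g) * P (l, g) (nu, be)
    = ((g == cfg_set al k (be k)) && agree_off (k :: ks) al be)%:R
      * (Rmat m lam b u (mu, al k) (l, g k)
         * (monodromy u ks g be * sigma_x) l nu).
  by rewrite /R_site /P IH //= -agree_off_cons // -mulnb natrM; ring.
rewrite (bigD1 (cfg_set al k (be k))) //= big1 => [|g /negbTE gNset]; last first.
  by rewrite siteE gNset mul0r.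
by rewrite siteE eqxx addr0 ffunE eqxx monodromy_cfg_set.
Qed.

Lemma transferE u al be :
  transfer m N lam b u al be = \tr (monodromy u (enum 'I_N) al be * sigma_x).
Proof.
rewrite /transfer /mxtrace; apply: eq_bigr => mu _.
rewrite op_prod_sitesE ?enum_uniq // (_ : agree_off _ _ _ = true) ?mul1r //.
by apply/forallP => i; rewrite mem_enum.
Qed.

End Monodromy.

Theorem lemma2 (m : nat) (hm : (1 <= m)%N) (N : nat) (hN : (1 <= N)%N)
    (lam : Cx) (b : nat -> Cx) (hb : is_b_choice m lam b) (u : Cx) :
  op_transpose _ (transfer m N lam b (- u - m%:R * lam))
  = (fun al be => (-1) ^+ (N.-1) * transfer m N lam b u al be).
Proof.
apply: functional_extensionality => al; apply: functional_extensionality => be.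
rewrite /op_transpose !transferE monodromy_crossing -scalerAl mxtraceZ.
rewrite mxtrace_conj_isigma_y_sigma_x size_enum_ord.
have -> : (-1) ^+ N = - (-1) ^+ N.-1 :> Cx.
  by rewrite -{1}(prednK hN) exprS mulN1r.
by rewrite mulNr mulrN opprK.
Qed.
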